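(* Let $S$ be an Enriques surface of the first Mendes Lopes–Pardini family and $\mathcal{R}=\{R_1,\dots,R_{12}\}$ as in the context. Then the elliptic fibrations in $\mathcal{E}(S,\mathcal{R})$ are: $2$ of type $(2\widetilde{A}_3^{\mathrm{HF}})$, $8$ of type $(\widetilde{A}_7^{\mathrm{F}})$, $8$ of type $(\widetilde{A}_7^{\mathrm{HF}})$, $2$ of type $(2\widetilde{D}_4^{\mathrm{F}})$, $8$ of type $(\widetilde{D}_6^{\mathrm{F}})$, $16$ of type $(\widetilde{D}_8^{\mathrm{F}})$. Moreover $\mathrm{cnd}(S,\mathcal{R})=8$, hence $\mathrm{nd}(S)\ge 8$, and the following classes form an isotropic sequence of classes of half-fibers of length $8$: $[R_1+R_2+R_3+R_4]$, $\tfrac12[R_1+R_2+R_4+R_5+R_7+R_8+R_{10}+R_{11}]$, $\tfrac12[R_1+R_2+R_4+R_5+R_7+R_9+R_{10}+R_{12}]$, $\tfrac12[R_1+R_3+R_4+R_5+R_7+R_8+R_{10}+R_{12}]$, $\tfrac12[R_1+R_3+R_4+R_5+R_7+R_9+R_{10}+R_{11}]$, $\tfrac12[R_2+R_3+2R_4+R_5+R_6]$, $\tfrac12[2R_1+R_2+R_3+R_{11}+R_{12}]$, $\tfrac12[R_2+R_3+2R_4+2R_5+2R_7+R_8+R_9]$.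
   Context: Work over $\mathbb{C}$. Let $D_1,D_2$ be elliptic curves, $A=D_1\times D_2$, $a\in D_1$, $b\in D_2$ nonzero $2$-torsion points, and $\mathbb{Z}_2^2=\langle e_1,e_2\rangle$ acting by $e_1(x_1,x_2)=(-x_1,x_2+b)$, $e_2(x_1,x_2)=(x_1+a,-x_2)$. The minimal resolution $S$ of $A/\mathbb{Z}_2^2$ (which has eight $A_1$ points) is an Enriques surface; the two projections induce elliptic fibrations each with two $\widetilde{D}_4$ fibers, whose components are twelve smooth rational curves $R_1,\dots,R_{12}$ with dual graph: $R_1,R_4,R_7,R_{10}$ pairwise disjoint; $R_2,R_3$ each meet $R_1,R_4$; $R_5,R_6$ each meet $R_4,R_7$; $R_8,R_9$ each meet $R_7,R_{10}$; $R_{11},R_{12}$ each meet $R_{10},R_1$; all intersections $1$, no others. The labeling is such that $\tfrac12(R_1+R_2+R_4+R_5+R_7+R_8+R_{10}+R_{11})\in\mathrm{Num}(S)$. Definitions: $\mathrm{Num}(S)$ = divisors mod numerical equivalence. Half-fibers: reduced curves $F$ with $2F$ a multiple fiber of an elliptic fibration. $\mathrm{nd}(S)$ = maximal length of a sequence of classes of half-fibers $f_1,\dots,f_m$ with $f_i\cdot f_j=1$ for $i\neq j$. For a finite set $\mathcal{R}$ of smooth rational curves: an $\mathcal{R}$-elliptic cycle is $C=\sum_{R\in\mathcal{R}}a_RR$, $a_R\ge0$, whose support has dual graph an extended Dynkin diagram $\widetilde{A}_n,\widetilde{D}_n,\widetilde{E}_{6,7,8}$ with $a_R$ the multiplicities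 of the corresponding Kodaira fiber. Put $c(C)=\tfrac12[C]$ if $\tfrac12[C]\in\mathrm{Num}(S)$ (then $C$ is a fiber) and $c(C)=[C]$ otherwise (then $C$ is a half-fiber). $\mathsf{HF}(S,\mathcal{R})=\{c(C)\}$; $\mathrm{cnd}(S,\mathcal{R})$ = max $m$ with $f_1,\dots,f_m\in\mathsf{HF}(S,\mathcal{R})$, $f_i\cdot f_j=1-\delta_{ij}$; $\mathcal{E}(S,\mathcal{R})$ = set of elliptic fibrations $|2F|$ with $[F]\in\mathsf{HF}(S,\mathcal{R})$. The type of a fibration in $\mathcal{E}(S,\mathcal{R})$ is the formal sum, over the $\mathcal{R}$-elliptic cycles $C$ whose support is a fiber of it, of $X^{\mathrm{F}}$ (if $C$ is a fiber) or $X^{\mathrm{HF}}$ (if $C$ is a half-fiber), $X$ the extended Dynkin type of $C$. *)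

From HB Require Import structures.
From mathcomp Require Import all_boot all_order all_algebra.
Set Implicit Arguments. Unset Strict Implicit. Unset Printing Implicit Defensive.
Import Order.TTheory GRing.Theory Num.Theory.
Local Open Scope ring_scope.

(* ---------- Num(S) modelled as Z^10 with an (even unimodular) form Q ---------- *)
Definition dot (Q : 'M[int]_10) (x y : 'rV[int]_10) : int := (x *m Q *m y^T) 0 0.

Definition halfable (x : 'rV[int]_10) : Prop := exists z : 'rV[int]_10, x = z *+ 2.

(* ---------- the configuration R_1..R_12 (index k : 'I_12 is R_(k+1)) ---------- *)
(* edges of the dual graph, 1-based labels as in the paper *)
Definition edges12 : seq (nat * nat) :=
  [:: (2,1); (2,4); (3,1); (3,4); (5,4); (5,7); (6,4); (6,7);
      (8,7); (8,10); (9,7); (9,10); (11,10); (11,1); (12,10); (12,1)].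

Definition gram (i j : 'I_12) : int :=
  if i == j then -2
  else if ((i.+1, j.+1) \in edges12) || ((j.+1, i.+1) \in edges12) then 1 else 0.

(* a divisor sum_k a_k R_k given by its coefficient list [a_1; ...; a_12] *)
Definition coefs (l : seq nat) : {ffun 'I_12 -> nat} := [ffun i : 'I_12 => nth 0%N l (nat_of_ord i)].

Definition cls (r : 'I_12 -> 'rV[int]_10) (a : {ffun 'I_12 -> nat}) : 'rV[int]_10 :=
  \sum_(k < 12) (a k)%:Z *: r k.

Inductive ktype := KA of nat | KD of nat | KE6 | KE7 | KE8.

Definition ktype_code (X : ktype) : nat * nat :=
  match X with KA n => (0, n) | KD n => (1, n) | KE6 => (2, 0)%N
             | KE7 => (3, 0)%N | KE8 => (4, 0)%N end.
Definition ktype_decode (c : nat * nat) : option ktype :=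
  match c with (0, n) => Some (KA n) | (1, n) => Some (KD n) | (2, _) => Some KE6
             | (3, _) => Some KE7 | (4, _) => Some KE8 | _ => None end%N.
Lemma ktype_codeK : pcancel ktype_code ktype_decode. Proof. by case. Qed.
HB.instance Definition _ := Equality.copy ktype (pcan_type ktype_codeK).

Definition kvalid (X : ktype) : bool :=
  match X with KA n => (0 < n)%N | KD n => (3 < n)%N | _ => true end.

Definition kv (X : ktype) : nat :=
  match X with KA n => n.+1 | KD n => n.+1 | KE6 => 7 | KE7 => 8 | KE8 => 9 end.

(* edges (with multiplicity: Ã_1 has a double edge) on vertices 0..kv X - 1 *)
Definition kedges (X : ktype) : seq (nat * nat) :=
  match X with
  | KA n => [seq (i, (i + 1) %% n.+1)%N | i <- iota 0 n.+1]
  | KD n => [seq (i, i.+1) | i <- iota 0 (n - 4)]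
              ++ [:: (n - 3, 0); (n - 2, 0); (n - 1, n - 4); (n, n - 4)]%N
  | KE6 => [:: (0,1); (1,2); (0,3); (3,4); (0,5); (5,6)]%N
  | KE7 => [:: (0,1); (1,2); (2,3); (3,4); (4,5); (5,6); (3,7)]%N
  | KE8 => [:: (0,1); (1,2); (2,3); (3,4); (4,5); (5,6); (6,7); (2,8)]%N
  end.

Definition kM (X : ktype) (i j : nat) : int :=
  if i == j then -2
  else (count (fun e => (e == (i, j)) || (e == (j, i))) (kedges X))%:Z.

Definition kmult (X : ktype) (i : nat) : nat :=
  match X with
  | KA _ => 1
  | KD n => if (i <= n - 4)%N then 2 else 1
  | KE6 => nth 0 [:: 3; 2; 1; 2; 1; 2; 1] i
  | KE7 => nth 0 [:: 1; 2; 3; 4; 3; 2; 1; 2] i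
  | KE8 => nth 0 [:: 2; 4; 6; 5; 4; 3; 2; 1; 3] i
  end%N.

Definition is_cycle (Q : 'M[int]_10) (r : 'I_12 -> 'rV[int]_10)
    (X : ktype) (a : {ffun 'I_12 -> nat}) : Prop :=
  kvalid X /\
  exists sigma : 'I_(kv X) -> 'I_12,
    [/\ injective sigma,
        (forall i j : 'I_(kv X), dot Q (r (sigma i)) (r (sigma j)) = kM X i j),
        (forall i : 'I_(kv X), a (sigma i) = kmult X i)
      & (forall k, (forall i, sigma i != k) -> a k = 0%N)].

Definition cmap (r : 'I_12 -> 'rV[int]_10) (a : {ffun 'I_12 -> nat})
    (f : 'rV[int]_10) : Prop :=
  (halfable (cls r a) /\ f *+ 2 = cls r a) \/ (~ halfable (cls r a) /\ f = cls r a).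

Definition HF (Q : 'M[int]_10) (r : 'I_12 -> 'rV[int]_10) (f : 'rV[int]_10) : Prop :=
  exists X a, is_cycle Q r X a /\ cmap r a f.

(* the fibration |2F| with [F] = f has type T (a multiset of pairs
   (extended Dynkin type, true = fiber "F" / false = half-fiber "HF")):
   T lists, with multiplicity, the R-elliptic cycles C with c(C) = f. *)
Definition fib_type (Q : 'M[int]_10) (r : 'I_12 -> 'rV[int]_10) (f : 'rV[int]_10)
    (T : seq (ktype * bool)) : Prop :=
  exists s : seq (ktype * {ffun 'I_12 -> nat} * bool),
    [/\ uniq [seq x.1 | x <- s],
        (forall x, x \in s ->
           [/\ is_cycle Q r x.1.1 x.1.2, cmap r x.1.2 f & (x.2 = true <-> halfable (cls r x.1.2))]),
        (forall X a, is_cycle Q r X a -> cmap r a f -> exists b, (X, a, b) \in s)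
      & perm_eq [seq (x.1.1, x.2) | x <- s] T].

Definition iso_seq (Q : 'M[int]_10) (r : 'I_12 -> 'rV[int]_10) (s : seq 'rV[int]_10) : Prop :=
  (forall f, f \in s -> HF Q r f) /\
  (forall i j, (i < size s)%N -> (j < size s)%N -> dot Q s`_i s`_j = (i != j)%:Z).

Definition cnd_eq (Q : 'M[int]_10) (r : 'I_12 -> 'rV[int]_10) (m : nat) : Prop :=
  (exists s, size s = m /\ iso_seq Q r s) /\ (forall s, iso_seq Q r s -> (size s <= m)%N).

From HB Require Import structures.
From mathcomp Require Import all_boot all_order all_algebra.
Import Order.TTheory GRing.Theory Num.Theory.
Set Implicit Arguments. Unset Strict Implicit. Unset Printing Implicit Defensive.
Local Open Scope ring_scope.

(* Everything happens in the sublattice of Num(S) spanned by R_1, ..., R_12 and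
   halves z_1, ..., z_5 of the five divisible divisors of the hypotheses.  The
   intersection numbers of the R_k are given by the dual graph, and ten explicit
   combinations of them are pairwise orthogonal with nonzero squares, so the R_k
   span a sublattice of rank 10: a class of this lattice is determined by its
   intersection numbers with R_1, ..., R_12.  The R-elliptic cycles are found by
   enumerating the embeddings of the extended Dynkin diagrams into the dual graph
   (48 of them); for each we record c(C) in terms of the generators, or a generator
   with odd intersection with C, which proves that C is not divisible by 2.
   Grouping the cycles by c(C) gives the 44 fibrations and their types, and
   cnd(S, R) = 8 is an exhaustive search for cliques in the graph "f.g = 1" on the
   44 classes. *)

(* A foldr rather than a bigop, so that the checks below evaluate under [vm_compute]. *)
Definition iota_sum (n : nat) (F : nat -> int) : int :=
  foldr (fun j acc => F j + acc) 0 (iota 0 n).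

Lemma iota_sumE n F : iota_sum n F = \sum_(j < n) F j.
Proof.
rewrite -(big_mkord xpredT) /index_iota subn0 /iota_sum.
by elim: (iota 0 n) => [|x s IH]; rewrite ?big_nil ?big_cons //= IH.
Qed.

Lemma nth_Posz (s : seq nat) k : (map Posz s)`_k = (nth 0%N s k)%:Z.
Proof. by elim: s k => [|x s IH] [|k] //=. Qed.

Lemma mulrn2_rV_inj n : injective (fun x : 'rV[int]_n => x *+ 2).
Proof.
move=> x y /= /eqP; rewrite -subr_eq0 -mulrnBl => /eqP /rowP D.
apply/rowP => k; apply/eqP; rewrite -subr_eq0; have := D k.
by rewrite mulmxnE !mxE -mulr_natr => /eqP; rewrite mulf_eq0 orbF.
Qed.

Lemma coefs_inj l l' : size l = 12%N -> size l' = 12%N -> coefs l = coefs l' -> l = l'.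
Proof.
move=> sl sl' E; apply: (@eq_from_nth _ 0%N); rewrite ?sl ?sl' // => i lt.
by have := congr1 (fun f : {ffun 'I_12 -> nat} => f (inord i)) E; rewrite !ffunE inordK.
Qed.

Lemma mulmx_trmx_eq0 (R : idomainType) n (A : 'M[R]_n) (v : 'rV[R]_n) :
  \det A != 0 -> A *m v^T = 0 -> v = 0.
Proof.
move=> dA Av0; have := congr1 (mulmx (\adj A)) Av0.
rewrite mulmxA mul_adj_mx mul_scalar_mx mulmx0 => /matrixP D.
apply/rowP => k; have := D k 0; rewrite !mxE => /eqP.
by rewrite mulf_eq0 (negbTE dA) => /eqP.
Qed.

Definition adj_in (tb : seq (seq bool)) (i j : nat) : bool := nth false (nth [::] tb i) j.

(* The largest increasing chain of pairwise adjacent vertices in [cand], by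
   exhaustive search; the recursion depth [fuel] bounds its size. *)
Fixpoint max_clique (tb : seq (seq bool)) (fuel : nat) (cand : seq nat) : nat :=
  if fuel is f.+1 then
    foldr (fun x acc => maxn (max_clique tb f [seq y <- cand | (x < y)%N && adj_in tb x y]).+1 acc)
      0%N cand
  else 0%N.

Section Clique.
Variable tb : seq (seq bool).

Lemma foldr_maxn_ge (F : nat -> nat) x s :
  x \in s -> (F x <= foldr (fun y acc => maxn (F y) acc) 0 s)%N.
Proof.
elim: s => [|y s IH] //; rewrite inE /= => /orP [/eqP ->|xs]; first exact: leq_maxl.
exact: leq_trans (IH xs) (leq_maxr _ _).
Qed.

Lemma max_clique_ge fuel cand t : sorted ltn t -> {subset t <= cand} ->
  {in t &, forall x y, (x < y)%N -> adj_in tb x y} -> (size t <= fuel)%N ->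
  (size t <= max_clique tb fuel cand)%N.
Proof.
elim: fuel cand t => [|f IH] cand [|x t] // st sub adj sz.
apply: leq_trans (foldr_maxn_ge _ (sub x (mem_head x t))); rewrite /= ltnS.
have xt y : y \in t -> (x < y)%N by apply/allP: y; exact: order_path_min ltn_trans st.
apply: IH => //; first exact: path_sorted st.
- move=> y yt; rewrite mem_filter xt // adj ?inE ?eqxx ?yt ?orbT ?xt //=.
  by apply: sub; rewrite inE yt orbT.
- by move=> a b ain bin; apply: adj; rewrite inE ?ain ?bin orbT.
Qed.

Lemma clique_le_max_clique n t : uniq t -> {subset t <= iota 0 n} ->
  {in t &, forall x y, x != y -> adj_in tb x y} -> (size t <= max_clique tb n (iota 0 n))%N.
Proof.
move=> ut sub adj; have pt : perm_eq (sort leq t) t by rewrite perm_sort.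
rewrite -(perm_size pt); apply: max_clique_ge.
- by rewrite ltn_sorted_uniq_leq (perm_uniq pt) ut sort_sorted //; exact: leq_total.
- by move=> z; rewrite (perm_mem pt); apply: sub.
- by move=> x y; rewrite !(perm_mem pt) => xt yt xy; apply: adj; rewrite // neq_ltn xy.
- by rewrite (perm_size pt); have := uniq_leq_size ut sub; rewrite size_iota.
Qed.

End Clique.

Definition kodaira_coefs (X : ktype) (s : seq nat) : seq nat :=
  mkseq (fun k => if k \in s then kmult X (index k s) else 0%N) 12.

Definition small_ktypes : seq ktype :=
  [seq KA n | n <- iota 1 11] ++ [seq KD n | n <- iota 4 8] ++ [:: KE6; KE7; KE8].

Definition extends_embedding (g : nat -> nat -> int) (X : ktype) (s : seq nat) (j : nat) :=
  (j \notin s) && all (fun i => g (nth 0%N s i) j == kM X i (size s)) (iota 0 (size s)).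

Fixpoint embeddings (g : nat -> nat -> int) (N : nat) (X : ktype) (n : nat) (s : seq nat) :=
  if n is n'.+1 then
    flatten [seq embeddings g N X n' (rcons s j) | j <- iota 0 N & extends_embedding g X s j]
  else [:: s].

Lemma small_ktypesP X : kvalid X -> (kv X <= 12)%N -> X \in small_ktypes.
Proof.
case: X => [n|n|||] n_gt n_lt; rewrite /small_ktypes !mem_cat; try exact: isT.
  by rewrite (map_f KA) // mem_iota; apply/andP.
by rewrite (map_f KD) ?orbT // mem_iota; apply/andP.
Qed.

Lemma mem_embeddings g N X n s t : uniq (s ++ t) -> all (fun j => j < N)%N (s ++ t) ->
  (forall i j, (i < j < size (s ++ t))%N ->
     g (nth 0%N (s ++ t) i) (nth 0%N (s ++ t) j) = kM X i j) ->
  size t = n -> s ++ t \in embeddings g N X n s.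
Proof.
elim: n s t => [|n IH] s [|j t] U A G //= => [_|[Hn]]; first by rewrite cats0 mem_seq1.
rewrite -cat_rcons; apply/flatten_mapP; exists j; last by apply: IH; rewrite ?cat_rcons.
rewrite mem_filter mem_iota /=; apply/andP; split; last first.
  by move/allP: A; apply; rewrite mem_cat mem_head orbT.
apply/andP; split; first by move: U; rewrite cat_uniq /= => /and3P[_ /norP[]].
apply/allP => i; rewrite mem_iota add0n => /andP[_ Hi]; apply/eqP.
have := G i (size s); rewrite nth_cat Hi nth_cat ltnn subnn; apply.
by rewrite size_cat /= -addSnnS leq_addr.
Qed.

Section BilinearForm.
Variable Q : 'M[int]_10.
Hypothesis QT : Q^T = Q.

Lemma dotC x y : dot Q x y = dot Q y x.
Proof.
rewrite /dot; have -> : y *m Q *m x^T = (x *m Q *m y^T)^T.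
  by rewrite !trmx_mul trmxK QT mulmxA.
by rewrite [in RHS]mxE.
Qed.

Lemma dotDl x y z : dot Q (x + y) z = dot Q x z + dot Q y z.
Proof. by rewrite /dot !mulmxDl mxE. Qed.

Lemma dotZl a x y : dot Q (a *: x) y = a * dot Q x y.
Proof. by rewrite /dot -!scalemxAl mxE. Qed.

Lemma dotNl x y : dot Q (- x) y = - dot Q x y.
Proof. by rewrite -scaleN1r dotZl mulN1r. Qed.

Lemma dot_suml n (F : 'I_n -> 'rV[int]_10) y : dot Q (\sum_i F i) y = \sum_i dot Q (F i) y.
Proof.
apply: (big_morph (fun x => dot Q x y) (fun a b => dotDl a b y)).
by rewrite /dot !mul0mx mxE.
Qed.

Lemma dotMnl x y n : dot Q (x *+ n) y = dot Q x y *+ n.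
Proof. by rewrite -scaler_nat dotZl mulr_natl. Qed.

Lemma dotMnr x y n : dot Q x (y *+ n) = dot Q x y *+ n.
Proof. by rewrite dotC dotMnl dotC. Qed.

Lemma dot_row_mul m (M : 'M[int]_(m, 10)) i v : dot Q (row i M) v = (M *m Q *m v^T) i 0.
Proof. by rewrite /dot -!row_mul mxE. Qed.

Lemma dot_rows_eq0 (M : 'M[int]_10) v : \det (M *m Q *m M^T) != 0 ->
  (forall i, dot Q (row i M) v = 0) -> v = 0.
Proof.
rewrite det_mulmx mulf_eq0 negb_or => /andP[dMQ _] Mv.
apply: (mulmx_trmx_eq0 dMQ); apply/matrixP => i k.
by rewrite (ord1 k) -dot_row_mul Mv mxE.
Qed.

End BilinearForm.

Definition gram_nat (i j : nat) : int :=
  if i == j then -2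
  else if ((i.+1, j.+1) \in edges12) || ((j.+1, i.+1) \in edges12) then 1 else 0.

Definition intersections (c : seq int) : seq int :=
  [seq iota_sum 12 (fun i => c`_i * gram_nat i j) | j <- iota 0 12].

Definition gram_form (c d : seq int) : int :=
  iota_sum 12 (fun i => c`_i * iota_sum 12 (fun j => d`_j * gram_nat i j)).

Definition halved_divisors : seq (seq nat) :=
  [:: [:: 1; 1; 0; 1; 1; 0; 1; 1; 0; 1; 1; 0]; [:: 2; 1; 1; 0; 0; 0; 0; 0; 0; 0; 1; 1];
      [:: 0; 1; 1; 2; 1; 1; 0; 0; 0; 0; 0; 0]; [:: 0; 0; 0; 0; 1; 1; 2; 1; 1; 0; 0; 0];
      [:: 0; 0; 0; 0; 0; 0; 0; 1; 1; 2; 1; 1]]%N.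

(* [double_coords e m] lists the coordinates on R_1, ..., R_12 of twice the
   class sum_j e_j z_j + sum_k m_k R_k, where 2 z_j is the j-th halved divisor;
   [gram_form] of two such lists is four times the intersection number. *)
Definition double_coords (e m : seq int) : seq int :=
  mkseq (fun k => iota_sum 5 (fun j => e`_j * (nth 0%N (nth [::] halved_divisors j) k)%:Z)
                  + m`_k *+ 2) 12.

Definition lattice_gens : seq (seq int * seq int) :=
  [seq ([::], mkseq (fun i => (i == j)%:R) 12) | j <- iota 0 12]
  ++ [seq (mkseq (fun i => (i == j)%:R) 5, [::]) | j <- iota 0 5].

(* A cycle [C] whose support is labelled by [cert_label] (a vertex of the
   diagram of [cert_type] goes to an index of R_1, ..., R_12), together with
   [c(C)]: [Some (e, m)] when [C] is a fiber and [c(C) = sum_j e_j z_j + sum_k m_k R_k],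
   [None] when [C] is a half-fiber. *)
Record cycle_cert := CycleCert {
  cert_type : ktype; cert_label : seq nat; cert_half : option (seq int * seq int) }.

Definition cert_triple (x : cycle_cert) := (cert_type x, cert_label x, cert_half x).
Definition triple_cert (t : ktype * seq nat * option (seq int * seq int)) :=
  CycleCert t.1.1 t.1.2 t.2.
Lemma cert_tripleK : cancel cert_triple triple_cert. Proof. by case. Qed.
HB.instance Definition _ := Equality.copy cycle_cert (can_type cert_tripleK).

Definition cert_coefs (x : cycle_cert) : seq nat := kodaira_coefs (cert_type x) (cert_label x).

Lemma size_cert_coefs x : size (cert_coefs x) = 12%N.
Proof. exact: size_mkseq. Qed.

Definition cert_dcoords (x : cycle_cert) : seq int :=
  if cert_half x is Some (e, m) then double_coords e m
  else double_coords [::] (map Posz (cert_coefs x)).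

Definition certs : seq cycle_cert := [::
  CycleCert (KA 3) [:: 0; 1; 3; 2] None
; CycleCert (KA 3) [:: 0; 10; 9; 11] None
; CycleCert (KA 3) [:: 3; 4; 6; 5] None
; CycleCert (KA 3) [:: 6; 7; 9; 8] None
; CycleCert (KA 7) [:: 0; 1; 3; 4; 6; 7; 9; 10] (Some ([:: 1; 0; 0; 0; 0], [:: 0; 0; 0; 0; 0; 0; 0; 0; 0; 0; 0; 0]))
; CycleCert (KA 7) [:: 0; 1; 3; 4; 6; 7; 9; 11] None
; CycleCert (KA 7) [:: 0; 1; 3; 4; 6; 8; 9; 10] None
; CycleCert (KA 7) [:: 0; 1; 3; 4; 6; 8; 9; 11] (Some ([:: 1; 0; 0; 0; 1], [:: 0; 0; 0; 0; 0; 0; 0; -1; 0; -1; -1; 0]))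
; CycleCert (KA 7) [:: 0; 1; 3; 5; 6; 7; 9; 10] None
; CycleCert (KA 7) [:: 0; 1; 3; 5; 6; 7; 9; 11] (Some ([:: 1; 0; 0; 1; 1], [:: 0; 0; 0; 0; -1; 0; -1; -1; -1; -1; -1; 0]))
; CycleCert (KA 7) [:: 0; 1; 3; 5; 6; 8; 9; 10] (Some ([:: 1; 0; 0; 1; 0], [:: 0; 0; 0; 0; -1; 0; -1; -1; 0; 0; 0; 0]))
; CycleCert (KA 7) [:: 0; 1; 3; 5; 6; 8; 9; 11] None
; CycleCert (KA 7) [:: 0; 2; 3; 4; 6; 7; 9; 10] None
; CycleCert (KA 7) [:: 0; 2; 3; 4; 6; 7; 9; 11] (Some ([:: 1; 0; 0; 1; 0], [:: -1; -1; 0; 0; 0; 0; 0; 0; 0; 0; -1; 0]))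
; CycleCert (KA 7) [:: 0; 2; 3; 4; 6; 8; 9; 10] (Some ([:: 1; 0; 0; 1; 1], [:: -1; -1; 0; 0; 0; 0; 0; -1; 0; -1; -1; -1]))
; CycleCert (KA 7) [:: 0; 2; 3; 4; 6; 8; 9; 11] None
; CycleCert (KA 7) [:: 0; 2; 3; 5; 6; 7; 9; 10] (Some ([:: 1; 0; 0; 0; 1], [:: -1; -1; 0; 0; 0; 1; 1; 0; 0; -1; -1; -1]))
; CycleCert (KA 7) [:: 0; 2; 3; 5; 6; 7; 9; 11] None
; CycleCert (KA 7) [:: 0; 2; 3; 5; 6; 8; 9; 10] None
; CycleCert (KA 7) [:: 0; 2; 3; 5; 6; 8; 9; 11] (Some ([:: 1; 0; 0; 0; 0], [:: -1; -1; 0; 0; 0; 1; 1; 0; 1; 0; -1; 0]))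
; CycleCert (KD 4) [:: 0; 1; 2; 10; 11] (Some ([:: 0; 0; 0; 1; 0], [:: 0; 0; 0; 0; 0; 0; 0; 0; 0; 0; 0; 0]))
; CycleCert (KD 4) [:: 3; 1; 2; 4; 5] (Some ([:: 0; 0; 0; 0; 1], [:: -1; 0; 0; 1; 1; 1; 1; 0; 0; -1; -1; -1]))
; CycleCert (KD 4) [:: 6; 4; 5; 7; 8] (Some ([:: 0; 0; 0; 1; 0], [:: 0; 0; 0; 0; 0; 0; 0; 0; 0; 0; 0; 0]))
; CycleCert (KD 4) [:: 9; 7; 8; 10; 11] (Some ([:: 0; 0; 0; 0; 1], [:: 0; 0; 0; 0; 0; 0; 0; 0; 0; 0; 0; 0]))
; CycleCert (KD 6) [:: 0; 1; 3; 10; 11; 4; 5] (Some ([:: 0; 0; 0; 1; 1], [:: 1; 1; 0; 1; 0; 0; -1; -1; -1; -1; 0; 0]))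
; CycleCert (KD 6) [:: 0; 2; 3; 10; 11; 4; 5] (Some ([:: 0; 0; 0; 1; 1], [:: 1; 0; 1; 1; 0; 0; -1; -1; -1; -1; 0; 0]))
; CycleCert (KD 6) [:: 0; 10; 9; 1; 2; 7; 8] (Some ([:: 0; 0; 0; 1; 1], [:: 0; 0; 0; 0; 0; 0; 0; 0; 0; 0; 0; -1]))
; CycleCert (KD 6) [:: 0; 11; 9; 1; 2; 7; 8] (Some ([:: 0; 0; 0; 1; 1], [:: 0; 0; 0; 0; 0; 0; 0; 0; 0; 0; -1; 0]))
; CycleCert (KD 6) [:: 3; 4; 6; 1; 2; 7; 8] (Some ([:: 0; 0; 0; 1; 1], [:: -1; 0; 0; 1; 1; 0; 1; 0; 0; -1; -1; -1]))
; CycleCert (KD 6) [:: 3; 5; 6; 1; 2; 7; 8] (Some ([:: 0; 0; 0; 1; 1], [:: -1; 0; 0; 1; 0; 1; 1; 0; 0; -1; -1; -1]))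
; CycleCert (KD 6) [:: 6; 7; 9; 4; 5; 10; 11] (Some ([:: 0; 0; 0; 1; 1], [:: 0; 0; 0; 0; 0; 0; 0; 0; -1; 0; 0; 0]))
; CycleCert (KD 6) [:: 6; 8; 9; 4; 5; 10; 11] (Some ([:: 0; 0; 0; 1; 1], [:: 0; 0; 0; 0; 0; 0; 0; -1; 0; 0; 0; 0]))
; CycleCert (KD 8) [:: 0; 1; 3; 4; 6; 10; 11; 7; 8] (Some ([:: 0; 0; 0; 0; 1], [:: 1; 1; 0; 1; 1; 0; 1; 0; 0; -1; 0; 0]))
; CycleCert (KD 8) [:: 0; 1; 3; 5; 6; 10; 11; 7; 8] (Some ([:: 0; 0; 0; 0; 1], [:: 1; 1; 0; 1; 0; 1; 1; 0; 0; -1; 0; 0]))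
; CycleCert (KD 8) [:: 0; 2; 3; 4; 6; 10; 11; 7; 8] (Some ([:: 0; 0; 0; 0; 1], [:: 1; 0; 1; 1; 1; 0; 1; 0; 0; -1; 0; 0]))
; CycleCert (KD 8) [:: 0; 2; 3; 5; 6; 10; 11; 7; 8] (Some ([:: 0; 0; 0; 0; 1], [:: 1; 0; 1; 1; 0; 1; 1; 0; 0; -1; 0; 0]))
; CycleCert (KD 8) [:: 0; 10; 9; 7; 6; 1; 2; 4; 5] (Some ([:: 0; 0; 0; 0; 1], [:: 0; 0; 0; 0; 1; 1; 2; 1; 0; 0; 0; -1]))
; CycleCert (KD 8) [:: 0; 10; 9; 8; 6; 1; 2; 4; 5] (Some ([:: 0; 0; 0; 0; 1], [:: 0; 0; 0; 0; 1; 1; 2; 0; 1; 0; 0; -1]))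
; CycleCert (KD 8) [:: 0; 11; 9; 7; 6; 1; 2; 4; 5] (Some ([:: 0; 0; 0; 0; 1], [:: 0; 0; 0; 0; 1; 1; 2; 1; 0; 0; -1; 0]))
; CycleCert (KD 8) [:: 0; 11; 9; 8; 6; 1; 2; 4; 5] (Some ([:: 0; 0; 0; 0; 1], [:: 0; 0; 0; 0; 1; 1; 2; 0; 1; 0; -1; 0]))
; CycleCert (KD 8) [:: 3; 1; 0; 10; 9; 4; 5; 7; 8] (Some ([:: 0; 0; 0; 1; 0], [:: 1; 1; 0; 1; 0; 0; -1; 0; 0; 1; 1; 0]))
; CycleCert (KD 8) [:: 3; 1; 0; 11; 9; 4; 5; 7; 8] (Some ([:: 0; 0; 0; 1; 0], [:: 1; 1; 0; 1; 0; 0; -1; 0; 0; 1; 0; 1]))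
; CycleCert (KD 8) [:: 3; 2; 0; 10; 9; 4; 5; 7; 8] (Some ([:: 0; 0; 0; 1; 0], [:: 1; 0; 1; 1; 0; 0; -1; 0; 0; 1; 1; 0]))
; CycleCert (KD 8) [:: 3; 2; 0; 11; 9; 4; 5; 7; 8] (Some ([:: 0; 0; 0; 1; 0], [:: 1; 0; 1; 1; 0; 0; -1; 0; 0; 1; 0; 1]))
; CycleCert (KD 8) [:: 3; 4; 6; 7; 9; 1; 2; 10; 11] (Some ([:: 0; 0; 0; 1; 0], [:: -1; 0; 0; 1; 1; 0; 1; 1; 0; 1; 0; 0]))
; CycleCert (KD 8) [:: 3; 4; 6; 8; 9; 1; 2; 10; 11] (Some ([:: 0; 0; 0; 1; 0], [:: -1; 0; 0; 1; 1; 0; 1; 0; 1; 1; 0; 0]))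
; CycleCert (KD 8) [:: 3; 5; 6; 7; 9; 1; 2; 10; 11] (Some ([:: 0; 0; 0; 1; 0], [:: -1; 0; 0; 1; 0; 1; 1; 1; 0; 1; 0; 0]))
; CycleCert (KD 8) [:: 3; 5; 6; 8; 9; 1; 2; 10; 11] (Some ([:: 0; 0; 0; 1; 0], [:: -1; 0; 0; 1; 0; 1; 1; 0; 1; 1; 0; 0]))
].

Definition cert (k : nat) : cycle_cert := nth (CycleCert (KA 1) [::] None) certs k.

Definition same_class (x y : cycle_cert) : bool :=
  intersections (cert_dcoords x) == intersections (cert_dcoords y).

Definition fibre_certs (k : nat) : seq cycle_cert := [seq x <- certs | same_class x (cert k)].

Definition fibre_types (k : nat) : seq (ktype * bool) :=
  [seq (cert_type x, cert_half x : bool) | x <- fibre_certs k].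

(* For each type of fibration, the indices in [certs] of one cycle per fibration
   of that type, and the type. *)
Definition fibration_table : seq (seq nat * seq (ktype * bool)) := [::
  ([:: 0; 1], [:: (KA 3, false); (KA 3, false)]);
  ([:: 4; 7; 9; 10; 13; 14; 16; 19], [:: (KA 7, true)]);
  ([:: 5; 6; 8; 11; 12; 15; 17; 18], [:: (KA 7, false)]);
  ([:: 20; 21], [:: (KD 4, true); (KD 4, true)]);
  ([:: 24; 25; 26; 27; 28; 29; 30; 31], [:: (KD 6, true)]);
  ([:: 32; 33; 34; 35; 36; 37; 38; 39; 40; 41; 42; 43; 44; 45; 46; 47], [:: (KD 8, true)])]%N.

Definition fibration_reps (i : nat) : seq nat := (nth ([::], [::]) fibration_table i).1.

Definition reps : seq nat := flatten [seq p.1 | p <- fibration_table].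

Definition isotropic_idx : seq nat := [:: 0; 4; 7; 13; 14; 21; 20; 28]%N.

Definition isotropic_adj : seq (seq bool) :=
  [seq [seq gram_form (cert_dcoords (cert i)) (cert_dcoords (cert j)) == 4 | j <- reps]
  | i <- reps].

Definition orth_basis : seq (seq int) := [::
  [:: 0; 0; 1; 0; 1; 0; 0; 1; -1; 0; 0; 0]; [:: 0; 1; -1; 0; 0; 0; 0; 0; -1; 0; 0; -1];
  [:: 0; -1; 0; 0; 0; 0; 0; -1; -1; 0; -1; 0]; [:: 0; 0; 0; 0; -1; 1; 0; 1; 0; 0; -1; 0];
  [:: -1; 0; 0; 1; 0; 0; -1; 0; 0; 1; 0; 0]; [:: 1; 0; 0; 0; 0; -1; -1; 0; 0; 0; 0; 0];
  [:: 0; 0; 0; -1; 0; 0; 0; 0; 1; 1; 0; 0]; [:: 0; 0; 1; 0; -1; -1; 0; 0; 0; 0; 0; -1];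
  [:: 0; 1; 0; 0; 0; -1; 0; 0; 0; 0; -1; 1]; [:: 0; 1; 1; 2; 2; 2; 2; 1; 1; 0; 0; 0]].

Definition cert_embeds (x : cycle_cert) : bool :=
  let X := cert_type x in let s := cert_label x in
  [&& kvalid X, size s == kv X, all (fun j => j < 12)%N s, uniq s &
      all (fun i => all (fun j => gram_nat (nth 0%N s i) (nth 0%N s j) == kM X i j)
                        (iota 0 (kv X))) (iota 0 (kv X))].

(* For a half-fiber C, an odd intersection of C with a generator of the lattice
   shows that [C] is not divisible by 2. *)
Definition cert_class_ok (x : cycle_cert) : bool :=
  if cert_half x is Some (e, m) then
    intersections (double_coords e m) == intersections (map Posz (cert_coefs x))
  else has (fun g => ~~ (8 %| gram_form (cert_dcoords x) (double_coords g.1 g.2))%Z) lattice_gens.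

Lemma certs_embed : all cert_embeds certs.
Proof. vm_cast_no_check (erefl true). Qed.

Lemma certs_class_ok : all cert_class_ok certs.
Proof. vm_cast_no_check (erefl true). Qed.

Lemma certs_complete :
  all (fun X => all (fun s =>
         has (fun x => (cert_type x == X) && (cert_coefs x == kodaira_coefs X s)) certs)
       (embeddings gram_nat 12 X (kv X) [::])) small_ktypes.
Proof. vm_cast_no_check (erefl true). Qed.

Lemma uniq_certs : uniq [seq (cert_type x, cert_coefs x) | x <- certs].
Proof. vm_cast_no_check (erefl true). Qed.

Lemma reps_cover : all (fun x => has (fun k => same_class (cert k) x) reps) certs.
Proof. vm_cast_no_check (erefl true). Qed.

Lemma reps_distinct : uniq [seq intersections (cert_dcoords (cert k)) | k <- reps].
Proof. vm_cast_no_check (erefl true). Qed.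

Lemma fibre_types_table :
  all (fun p => all (fun k => perm_eq (fibre_types k) p.2) p.1) fibration_table.
Proof. vm_cast_no_check (erefl true). Qed.

Lemma max_clique_isotropic_adj : (max_clique isotropic_adj 44 (iota 0 44) <= 8)%N.
Proof. vm_cast_no_check (erefl true). Qed.

Lemma isotropic_idx_gram : all (fun i => all (fun j =>
    gram_form (cert_dcoords (cert (nth 0%N isotropic_idx i)))
              (cert_dcoords (cert (nth 0%N isotropic_idx j))) == 4 * (i != j)%:Z)
  (iota 0 8)) (iota 0 8).
Proof. vm_cast_no_check (erefl true). Qed.

Lemma orth_basis_gram : all (fun i => all (fun j =>
    if i == j then gram_form (nth [::] orth_basis i) (nth [::] orth_basis j) != 0
    else gram_form (nth [::] orth_basis i) (nth [::] orth_basis j) == 0)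
  (iota 0 10)) (iota 0 10).
Proof. vm_cast_no_check (erefl true). Qed.

Lemma reps_in_certs : all (fun k => k < size certs)%N reps.
Proof. by []. Qed.

Lemma isotropic_idx_in_reps : all (mem reps) isotropic_idx.
Proof. by []. Qed.

Section Configuration.
Variables (Q : 'M[int]_10) (r : 'I_12 -> 'rV[int]_10).
Hypotheses (QT : Q^T = Q) (Hg : forall i j, dot Q (r i) (r j) = gram i j).

Definition comb (c : seq int) : 'rV[int]_10 := \sum_(k < 12) c`_k *: r k.

Lemma cls_comb l : cls r (coefs l) = comb (map Posz l).
Proof. by apply: eq_bigr => k _; rewrite ffunE nth_Posz. Qed.

Lemma dot_comb_r c (j : 'I_12) : dot Q (comb c) (r j) = (intersections c)`_j.
Proof.
rewrite (nth_map 0%N) ?size_iota // nth_iota // iota_sumE dot_suml.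
by apply: eq_bigr => i _; rewrite dotZl Hg.
Qed.

Lemma dot_comb c d : dot Q (comb c) (comb d) = gram_form c d.
Proof.
rewrite /gram_form iota_sumE dot_suml; apply: eq_bigr => i _; rewrite dotZl iota_sumE.
congr (_ * _); rewrite dotC // dot_suml; apply: eq_bigr => j _.
by rewrite dotZl dotC // Hg.
Qed.

Lemma orthogonal_R_eq0 v : (forall j, dot Q (r j) v = 0) -> v = 0.
Proof.
move=> Rv; pose w i := nth [::] orth_basis i; pose u i := comb (w i).
pose M := \matrix_(i < 10) u i.
have gramM (i j : 'I_10) : (M *m Q *m M^T) i j = gram_form (w i) (w j).
  rewrite -dot_comb -/(u i) -/(u j) -(rowK u i) -(rowK u j) dot_row_mul !mxE.
  by apply: eq_bigr => l _; rewrite !mxE.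
have w_orth (i j : 'I_10) : (gram_form (w i) (w j) != 0) = (i == j).
  have iota10 (k : 'I_10) : nat_of_ord k \in iota 0 10 by rewrite mem_iota ltn_ord.
  have := allP (allP orth_basis_gram i (iota10 i)) j (iota10 j).
  case: eqP => [/val_inj -> ->|ij /eqP ->]; first by rewrite eqxx.
  by rewrite eqxx; apply/esym/eqP => E; apply: ij; rewrite E.
have diagM : M *m Q *m M^T = diag_mx (\row_i gram_form (w i) (w i)).
  apply/matrixP => i j; rewrite gramM !mxE.
  case: (i =P j) => [->|/eqP ij]; first by rewrite mulr1n.
  by rewrite mulr0n; apply/eqP/negPn; rewrite w_orth.
have detM : \det (M *m Q *m M^T) != 0.
  by rewrite diagM det_diag; apply/prodf_neq0 => i _; rewrite mxE w_orth.
apply: (dot_rows_eq0 detM) => i.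
by rewrite rowK /u dot_suml big1 // => k _; rewrite dotZl Rv mulr0.
Qed.

Lemma comb_eqP c d : comb c = comb d <-> intersections c = intersections d.
Proof.
split=> [E|E]; last first.
  apply/eqP; rewrite -subr_eq0; apply/eqP/orthogonal_R_eq0 => j.
  by rewrite dotC // dotDl dotNl !dot_comb_r E subrr.
apply: (@eq_from_nth _ 0); rewrite ?size_map ?size_iota // => j lt.
by rewrite -(dot_comb_r c (Ordinal lt)) -(dot_comb_r d (Ordinal lt)) E.
Qed.

Variable z : seq 'rV[int]_10.
Hypothesis z_half :
  forall j, (j < 5)%N -> z`_j *+ 2 = comb (map Posz (nth [::] halved_divisors j)).

Definition gen_class (e m : seq int) : 'rV[int]_10 := \sum_(j < 5) e`_j *: z`_j + comb m.

Lemma comb_double_coords e m : comb (double_coords e m) = gen_class e m *+ 2.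
Proof.
rewrite /gen_class mulrnDl -sumrMnl.
transitivity (\sum_(k < 12)
  ((\sum_(j < 5) e`_j * (nth 0%N (nth [::] halved_divisors j) k)%:Z) *: r k + (m`_k *+ 2) *: r k)).
  by apply: eq_bigr => k _; rewrite nth_mkseq // iota_sumE scalerDl.
rewrite big_split /=; congr (_ + _); last first.
  by rewrite /comb -sumrMnl; apply: eq_bigr => k _; rewrite scalerMnl.
under eq_bigr => k _ do rewrite scaler_suml.
rewrite exchange_big /=; apply: eq_bigr => j _; rewrite scalerMnr z_half // /comb scaler_sumr.
by apply: eq_bigr => k _; rewrite nth_Posz scalerA.
Qed.

Definition cert_class (x : cycle_cert) : 'rV[int]_10 :=
  if cert_half x is Some (e, m) then gen_class e m else cls r (coefs (cert_coefs x)).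

Lemma comb_cert_dcoords x : comb (cert_dcoords x) = cert_class x *+ 2.
Proof.
rewrite /cert_dcoords /cert_class.
case: (cert_half x) => [[e m]|]; rewrite comb_double_coords //.
by rewrite /gen_class big1 ?add0r ?cls_comb // => j _; rewrite nth_nil scale0r.
Qed.

Lemma dot_cert_class x y :
  dot Q (cert_class x) (cert_class y) * 4 = gram_form (cert_dcoords x) (cert_dcoords y).
Proof. by rewrite -dot_comb !comb_cert_dcoords dotMnl (dotMnr QT) -mulrnA mulr_natr. Qed.

Lemma cert_class_eqP x y : cert_class x = cert_class y <-> same_class x y.
Proof.
rewrite /same_class; split=> [E|/eqP/comb_eqP].
  by apply/eqP/comb_eqP; rewrite !comb_cert_dcoords E.
by rewrite !comb_cert_dcoords; exact: mulrn2_rV_inj.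
Qed.

Lemma intersections_cert_dcoords x :
  intersections (cert_dcoords x) = mkseq (fun j => dot Q (cert_class x) (r (inord j)) *+ 2) 12.
Proof.
apply: (@eq_from_nth _ 0); rewrite ?size_map ?size_iota ?size_mkseq // => j lt.
by rewrite nth_mkseq // -dotMnl -comb_cert_dcoords dot_comb_r inordK.
Qed.

Section Certificates.
Variable x : cycle_cert.
Hypothesis x_cert : x \in certs.

Lemma cert_class_half : cert_half x -> cert_class x *+ 2 = cls r (coefs (cert_coefs x)).
Proof.
have := allP certs_class_ok x x_cert; rewrite /cert_class_ok /cert_class.
case: (cert_half x) => [[e m]|] // /eqP/comb_eqP E _.
by rewrite -comb_double_coords E cls_comb.
Qed.

Lemma cert_not_halfable : cert_half x = None -> ~ halfable (cls r (coefs (cert_coefs x))).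
Proof.
move=> hx [w Ew]; have := allP certs_class_ok x x_cert.
rewrite /cert_class_ok hx => /hasP [[e m] _ /negP]; apply.
rewrite -dot_comb comb_cert_dcoords comb_double_coords /cert_class hx Ew /=.
by rewrite !dotMnl (dotMnr QT) -!mulrnA -(@mulr_natr int) dvdz_mull.
Qed.

Lemma halfable_certP : cert_half x <-> halfable (cls r (coefs (cert_coefs x))).
Proof.
split=> [hx|]; first by exists (cert_class x); rewrite cert_class_half.
by case hx: (cert_half x) => // /(cert_not_halfable hx).
Qed.

Lemma cmap_certP f : cmap r (coefs (cert_coefs x)) f <-> f = cert_class x.
Proof.
have [hx|hx] := boolP (cert_half x).
  have hc := iffLR halfable_certP hx; have E := cert_class_half hx.
  split=> [[[_ Ef]|[/(_ hc)]] //|->]; last by left.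
  by apply: mulrn2_rV_inj; rewrite /= Ef E.
have hN : cert_half x = None by move: hx; case: (cert_half x).
have nh := cert_not_halfable hN.
by rewrite /cert_class hN; split=> [[[/nh]|[_ ->]]|->] //; right.
Qed.

Lemma cert_cycle : is_cycle Q r (cert_type x) (coefs (cert_coefs x)).
Proof.
have := allP certs_embed x x_cert; rewrite /cert_embeds /cert_coefs.
move: (cert_type x) (cert_label x) => X s /and5P[kX /eqP sz /allP s12 us /allP dots].
have lt (i : 'I_(kv X)) : (nth 0%N s i < 12)%N by apply/s12/mem_nth; rewrite sz.
split=> //; exists (fun i => Ordinal (lt i)); split.
- move=> i j [] /eqP; rewrite nth_uniq ?sz // => /eqP; exact: val_inj.
- move=> i j; rewrite Hg; apply/eqP.
  have iota_kv (k : 'I_(kv X)) : nat_of_ord k \in iota 0 (kv X) by rewrite mem_iota ltn_ord.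
  exact: (allP (dots i (iota_kv i)) j (iota_kv j)).
- by move=> i; rewrite ffunE /= nth_mkseq // mem_nth ?sz // index_uniq ?sz.
- move=> k nk; rewrite ffunE nth_mkseq //; case: ifP => // ks.
  have ilt : (index (nat_of_ord k) s < kv X)%N by rewrite -sz index_mem.
  by have /eqP[] := nk (Ordinal ilt); apply: val_inj; rewrite /= nth_index.
Qed.

End Certificates.

Lemma is_cycle_embedding X a : is_cycle Q r X a ->
  exists2 s, s \in embeddings gram_nat 12 X (kv X) [::] &
             X \in small_ktypes /\ a = coefs (kodaira_coefs X s).
Proof.
case=> kX [sigma [inj dots mults zeros]].
have kv12 : (kv X <= 12)%N by have := leq_card sigma inj; rewrite !card_ord.
pose s := [seq val (sigma i) | i <- enum 'I_(kv X)].
have sz : size s = kv X by rewrite size_map size_enum_ord.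
have ns (i : 'I_(kv X)) : nth 0%N s i = sigma i.
  by rewrite (nth_map i) ?size_enum_ord // nth_ord_enum.
exists s; last split; first (rewrite -[s]/([::] ++ s); apply: mem_embeddings => //=).
- by rewrite map_inj_uniq ?enum_uniq // => i j /val_inj /inj.
- by apply/allP => _ /mapP [i _ ->]; exact: ltn_ord.
- move=> i j /andP[ij jlt]; have ilt := ltn_trans ij jlt; rewrite sz in jlt ilt.
  by rewrite -[i]/(nat_of_ord (Ordinal ilt)) -[j]/(nat_of_ord (Ordinal jlt)) !ns -dots.
- exact: small_ktypesP.
apply/ffunP => k; rewrite !ffunE nth_mkseq //; case: ifP => ks.
  have ilt : (index (nat_of_ord k) s < kv X)%N by rewrite -sz index_mem.
  have E : sigma (Ordinal ilt) = k by apply: val_inj; rewrite /= -ns nth_index.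
  by rewrite -{1}E mults.
by apply: zeros => i; apply/eqP => E; move: ks; rewrite -E -ns mem_nth // sz.
Qed.

Lemma cert_complete X a : is_cycle Q r X a ->
  exists2 x, x \in certs & cert_type x = X /\ a = coefs (cert_coefs x).
Proof.
case/is_cycle_embedding => s s_emb [X_small ->].
have /hasP [x x_cert /andP[/eqP xX /eqP xs]] := allP (allP certs_complete X X_small) s s_emb.
by exists x; rewrite // xs.
Qed.

Lemma HF_certP f : HF Q r f <-> exists2 x, x \in certs & f = cert_class x.
Proof.
split=> [[X [a [/cert_complete[x x_cert [_ ->]] cm]]]|[x x_cert ->]].
  by exists x; last exact/(cmap_certP x_cert).
exists (cert_type x), (coefs (cert_coefs x)).
by split; [exact: cert_cycle | exact/(cmap_certP x_cert)].
Qed.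

Definition fibration_classes (rs : seq nat) : seq 'rV[int]_10 :=
  [seq cert_class (cert k) | k <- rs].

Lemma cert_rep_in_certs k : k \in reps -> cert k \in certs.
Proof. by move=> k_rep; apply/mem_nth/(allP reps_in_certs). Qed.

Lemma HF_fibration_classes f : HF Q r f <-> f \in fibration_classes reps.
Proof.
split=> [/HF_certP[x x_cert ->]|/mapP[k k_rep ->]].
  have /hasP[k k_rep /cert_class_eqP E] := allP reps_cover x x_cert.
  by rewrite -E; apply: (map_f (fun k => cert_class (cert k))).
by apply/HF_certP; exists (cert k) => //; exact: cert_rep_in_certs.
Qed.

Lemma uniq_fibration_classes : uniq (fibration_classes reps).
Proof.
pose meets f := mkseq (fun j => dot Q f (r (inord j)) *+ 2) 12.
have : uniq (map meets (fibration_classes reps)).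
  rewrite -map_comp (eq_map (fun k => esym (intersections_cert_dcoords (cert k)))).
  exact: reps_distinct.
exact: map_uniq.
Qed.

Lemma fib_type_rep k T : k \in reps -> perm_eq (fibre_types k) T ->
  fib_type Q r (cert_class (cert k)) T.
Proof.
move=> k_rep pT.
exists [seq (cert_type x, coefs (cert_coefs x), cert_half x : bool) | x <- fibre_certs k].
have fibreP x : x \in fibre_certs k -> x \in certs /\ cert_class x = cert_class (cert k).
  by rewrite mem_filter => /andP[/cert_class_eqP E x_cert].
split=> [||X a|]; last by
  rewrite -map_comp; apply: perm_trans pT; rewrite /fibre_types; exact: perm_refl.
- have -> : [seq y.1 | y <- [seq (cert_type x, coefs (cert_coefs x), cert_half x : bool)
                              | x <- fibre_certs k]]
            = [seq (p.1, coefs p.2) | p <- [seq (cert_type x, cert_coefs x) | x <- fibre_certs k]].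
    by rewrite -!map_comp.
  rewrite map_inj_in_uniq; first exact: subseq_uniq (map_subseq _ (filter_subseq _ _)) uniq_certs.
  move=> [X1 l1] [X2 l2] /mapP[x1 _ [-> ->]] /mapP[x2 _ [-> ->]] [->].
  by move/(coefs_inj (size_cert_coefs x1) (size_cert_coefs x2)) ->.
- move=> _ /mapP[x x_fibre ->]; have [x_cert E] := fibreP x x_fibre.
  by split; [exact: cert_cycle | apply/(cmap_certP x_cert) | exact: halfable_certP].
- move=> /cert_complete[x x_cert [<- ->]] /(cmap_certP x_cert) E.
  exists (cert_half x : bool); apply: map_f.
  by rewrite mem_filter x_cert andbT; apply/cert_class_eqP.
Qed.

Lemma fib_type_table rs T : (rs, T) \in fibration_table ->
  {in fibration_classes rs, forall f, fib_type Q r f T}.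
Proof.
move=> rsT _ /mapP[k k_rs ->]; apply: fib_type_rep.
  by apply/flattenP; exists rs => //; apply/mapP; exists (rs, T).
exact: allP (allP fibre_types_table _ rsT) k k_rs.
Qed.

Lemma iso_seq_isotropic_idx : iso_seq Q r (fibration_classes isotropic_idx).
Proof.
split=> [f /mapP[k /(allP isotropic_idx_in_reps) k_rep ->]|i j].
  by apply/HF_fibration_classes; apply: (map_f (fun k => cert_class (cert k))).
rewrite size_map => i_lt j_lt; apply: (@mulIf _ 4) => //.
rewrite !(nth_map 0%N) // dot_cert_class mulrC.
have iota8 k : (k < 8)%N -> k \in iota 0 8 by move=> k_lt; rewrite mem_iota.
exact/eqP/(allP (allP isotropic_idx_gram i (iota8 i i_lt)) j (iota8 j j_lt)).
Qed.

Lemma isotropic_adjE a b : (a < 44)%N -> (b < 44)%N ->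
  adj_in isotropic_adj a b
  = (dot Q (fibration_classes reps)`_a (fibration_classes reps)`_b == 1).
Proof.
move=> a_lt b_lt; rewrite /adj_in /isotropic_adj !(nth_map 0%N) //.
by rewrite -dot_cert_class -[X in _ == X]mul1r (inj_eq (mulIf _)).
Qed.

Lemma iso_seq_uniq s : iso_seq Q r s -> uniq s.
Proof.
move=> [_ s_dot]; apply/(uniqP 0) => i j i_lt j_lt E; apply/eqP; apply: contraT => ij.
by have := s_dot i j i_lt j_lt; rewrite E s_dot // eqxx ij.
Qed.

Lemma iso_seq_dot s f g : iso_seq Q r s -> f \in s -> g \in s -> f != g -> dot Q f g = 1.
Proof.
move=> [_ s_dot] f_s g_s fg.
rewrite -(nth_index 0 f_s) -(nth_index 0 g_s) s_dot ?index_mem //.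
suff -> : index f s != index g s by [].
by apply: contra fg => /eqP E; rewrite -(nth_index 0 f_s) E nth_index.
Qed.

Lemma iso_seq_size_le8 s : iso_seq Q r s -> (size s <= 8)%N.
Proof.
move=> iso_s; have size_fc : size (fibration_classes reps) = 44%N by rewrite size_map.
have s_fc f : f \in s -> f \in fibration_classes reps.
  by case: iso_s => s_HF _ /s_HF/HF_fibration_classes.
have fc_lt h : h \in fibration_classes reps -> (index h (fibration_classes reps) < 44)%N.
  by rewrite -size_fc index_mem.
rewrite -(size_map (index^~ (fibration_classes reps))); apply: leq_trans max_clique_isotropic_adj.
apply: clique_le_max_clique.
- rewrite map_inj_in_uniq; first exact: iso_seq_uniq iso_s.
  move=> f g /s_fc f_fc /s_fc g_fc E.
  by rewrite -(nth_index 0 f_fc) E nth_index.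
- by move=> _ /mapP[f /s_fc f_fc ->]; rewrite mem_iota leq0n add0n fc_lt.
move=> _ _ /mapP[f f_s ->] /mapP[g g_s ->] ne.
have fg : f != g by apply: contraNneq ne => ->.
have [f_fc g_fc] := (s_fc f f_s, s_fc g g_s).
rewrite isotropic_adjE; [|exact: fc_lt f_fc|exact: fc_lt g_fc].
have dot_fg := iso_seq_dot iso_s f_s g_s fg.
(* Rewriting in the goal instead is very slow: unification then tries to equate
   [index f _] and [index g _] by evaluating them. *)
rewrite -(nth_index 0 f_fc) -(nth_index 0 g_fc) in dot_fg.
by rewrite dot_fg.
Qed.

Lemma cnd_eq8 : cnd_eq Q r 8.
Proof.
split; last exact: iso_seq_size_le8.
by exists (fibration_classes isotropic_idx); split; last exact: iso_seq_isotropic_idx.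
Qed.

Lemma fibration_classes_half rs i : (i < size rs)%N -> nth 0%N rs i \in reps ->
  cert_half (cert (nth 0%N rs i)) ->
  (fibration_classes rs)`_i *+ 2 = cls r (coefs (cert_coefs (cert (nth 0%N rs i)))).
Proof. by move=> i_lt k_rep; rewrite (nth_map 0%N) //; apply/cert_class_half/cert_rep_in_certs. Qed.

End Configuration.

Theorem proposition6p2 (Q : 'M[int]_10) (r : 'I_12 -> 'rV[int]_10) :
  Q^T = Q -> (forall i, (2 %| Q i i)%Z) -> `|\det Q| = 1 ->
  (forall i j, dot Q (r i) (r j) = gram i j) ->
  halfable (cls r (coefs [:: 1; 1; 0; 1; 1; 0; 1; 1; 0; 1; 1; 0]%N)) ->
  halfable (cls r (coefs [:: 2; 1; 1; 0; 0; 0; 0; 0; 0; 0; 1; 1]%N)) ->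
  halfable (cls r (coefs [:: 0; 1; 1; 2; 1; 1; 0; 0; 0; 0; 0; 0]%N)) ->
  halfable (cls r (coefs [:: 0; 0; 0; 0; 1; 1; 2; 1; 1; 0; 0; 0]%N)) ->
  halfable (cls r (coefs [:: 0; 0; 0; 0; 0; 0; 0; 1; 1; 2; 1; 1]%N)) ->
  (exists fs1 fs2 fs3 fs4 fs5 fs6 : seq 'rV[int]_10,
     map size [:: fs1; fs2; fs3; fs4; fs5; fs6] = [:: 2; 8; 8; 2; 8; 16]%N /\
     uniq (fs1 ++ fs2 ++ fs3 ++ fs4 ++ fs5 ++ fs6) /\
     (forall f, HF Q r f <-> f \in fs1 ++ fs2 ++ fs3 ++ fs4 ++ fs5 ++ fs6) /\
     (forall f, f \in fs1 -> fib_type Q r f [:: (KA 3, false); (KA 3, false)]) /\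
     (forall f, f \in fs2 -> fib_type Q r f [:: (KA 7, true)]) /\
     (forall f, f \in fs3 -> fib_type Q r f [:: (KA 7, false)]) /\
     (forall f, f \in fs4 -> fib_type Q r f [:: (KD 4, true); (KD 4, true)]) /\
     (forall f, f \in fs5 -> fib_type Q r f [:: (KD 6, true)]) /\
     (forall f, f \in fs6 -> fib_type Q r f [:: (KD 8, true)])) /\
  cnd_eq Q r 8 /\
  (exists s : seq 'rV[int]_10,
     size s = 8%N /\ iso_seq Q r s /\
     s`_0 = cls r (coefs [:: 1; 1; 1; 1; 0; 0; 0; 0; 0; 0; 0; 0]%N) /\
     s`_1 *+ 2 = cls r (coefs [:: 1; 1; 0; 1; 1; 0; 1; 1; 0; 1; 1; 0]%N) /\
     s`_2 *+ 2 = cls r (coefs [:: 1; 1; 0; 1; 1; 0; 1; 0; 1; 1; 0; 1]%N) /\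
     s`_3 *+ 2 = cls r (coefs [:: 1; 0; 1; 1; 1; 0; 1; 1; 0; 1; 0; 1]%N) /\
     s`_4 *+ 2 = cls r (coefs [:: 1; 0; 1; 1; 1; 0; 1; 0; 1; 1; 1; 0]%N) /\
     s`_5 *+ 2 = cls r (coefs [:: 0; 1; 1; 2; 1; 1; 0; 0; 0; 0; 0; 0]%N) /\
     s`_6 *+ 2 = cls r (coefs [:: 2; 1; 1; 0; 0; 0; 0; 0; 0; 0; 1; 1]%N) /\
     s`_7 *+ 2 = cls r (coefs [:: 0; 1; 1; 2; 2; 0; 2; 1; 1; 0; 0; 0]%N)).
Proof.
move=> QT _ _ Hg [z0 E0] [z1 E1] [z2 E2] [z3 E3] [z4 E4].
pose z := [:: z0; z1; z2; z3; z4].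
have z_half j : (j < 5)%N -> z`_j *+ 2 = comb r (map Posz (nth [::] halved_divisors j)).
  by rewrite -cls_comb; case: j => [|[|[|[|[|j]]]]] //= _; apply/esym.
have fib := fib_type_table QT Hg z_half.
split.
  exists (fibration_classes r z (fibration_reps 0)), (fibration_classes r z (fibration_reps 1)),
    (fibration_classes r z (fibration_reps 2)), (fibration_classes r z (fibration_reps 3)),
    (fibration_classes r z (fibration_reps 4)), (fibration_classes r z (fibration_reps 5)).
  rewrite -!map_cat; split; first by [].
  split; first exact: uniq_fibration_classes.
  split; first by move=> f; exact: HF_fibration_classes.
  by do !split; apply: fib; exact: isT.
split; first exact (cnd_eq8 QT Hg z_half).
exists (fibration_classes r z isotropic_idx); split; first by rewrite size_map.
split; first exact: iso_seq_isotropic_idx.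
split; first by [].
by do !split; apply: (fibration_classes_half QT Hg z_half); exact: isT.
Qed.
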